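(* Let $G=(V,E)$ be a connected graph with $n$ nodes and let $G'=(V,E\cup \beta)$ be the modified graph after the insertion of a batch $\beta$ of edges. Let $S$ be a set of $r$ shortest paths of $G$ sampled according to $\pi_{G}$, with $r=\frac{c}{\epsilon^{2}}\left(\lfloor\log_{2}\left(VD(G)-2\right)\rfloor+1+\ln\frac{1}{\delta}\right)$ for some constants $\epsilon,\delta\in(0,1)$. Then, if a new set $S'$ of shortest paths of $G'$ is built according to procedure $\mathcal{P}$ and the approximated betweenness centrality $\tilde{c}'_B(v)$ of each node $v$ is computed as the fraction of paths of $S'$ that $v$ is internal to, then \[ \Pr(\exists v\in V\ \text{s.t.}\ |c'_{B}(v)-\tilde{c}'_B(v)|>\epsilon)<\delta, \] where $c'_{B}(v)$ is the new exact value of betweenness centrality of $v$ after the edge insertions.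
   Context: For a graph with $n$ nodes, $\sigma_{st}$ denotes the number of shortest paths from $s$ to $t$ and $\sigma_{st}(v)$ the number of those passing through $v$; the (normalized) betweenness centrality is $c_B(v)=\frac{1}{n(n-1)}\sum_{s\neq v\neq t}\frac{\sigma_{st}(v)}{\sigma_{st}}$. The sampling distribution $\pi_G$ assigns to each shortest path $p_{st}$ of $G$ the probability $\pi_G(p_{st})=\frac{1}{n(n-1)}\cdot\frac{1}{\sigma_{st}}$ of being chosen in each of the $r$ independent sampling iterations (choose an ordered node pair $(s,t)$ uniformly at random, then a shortest $s$–$t$ path uniformly at random). $VD(G)$ is the vertex diameter of $G$ (number of nodes on a shortest path of $G$ with the maximum number of nodes), or an upper bound on it that cannot increase under edge insertions in a connected graph; $c\approx 0.5$ is a universal constant. Procedure $\mathcal{P}$: for each sampled path $p_{st}\in S$, keep it ($p'_{st}=p_{st}$) if the new distance $d'_s(t)$ equals the old distance $d_s(t)$ and the new number of shortest paths $\sigma'_{st}$ equals $\sigma_{st}$; otherwise replace it by a path $p'_{st}$ chosen uniformly at random among the set of shortest $s$–$t$ paths in $G'$. *)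

From HB Require Import structures.
From mathcomp Require Import all_boot all_order all_algebra.
From mathcomp Require Import all_classical all_reals all_analysis.
Set Implicit Arguments. Unset Strict Implicit. Unset Printing Implicit Defensive.
Import Order.TTheory GRing.Theory Num.Theory.
Local Open Scope ring_scope.

Section Graphs.
Variable T : finType.

Definition simple_graph (e : rel T) : Prop := symmetric e /\ irreflexive e.
Definition connected_graph (e : rel T) : Prop := forall s t : T, connect e s t.

(* w is the tail of a walk s = w_0, w_1, ..., w_k = t *)
Definition walk_of (e : rel T) (s t : T) (w : seq T) : bool :=
  path e s w && (last s w == t).

Definition has_walk (e : rel T) (s t : T) (k : nat) : bool :=
  [exists w : k.-tuple T, walk_of e s t w].

(* d_s(t): least number of edges of an s-t walk (= #|T| if none exists). *)
Definition dist (e : rel T) (s t : T) : nat :=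
  find (has_walk e s t) (iota 0 #|T|).

Definition spaths (e : rel T) (s t : T) : seq (seq T) :=
  [seq s :: tval w | w <- enum [pred w : (dist e s t).-tuple T | walk_of e s t w]].

Definition sigma (e : rel T) (s t : T) : nat := size (spaths e s t).

Definition internal (v : T) (p : seq T) : bool :=
  [&& v \in p, v != head v p & v != last v p].

Definition sigmav (e : rel T) (s t v : T) : nat :=
  count (internal v) (spaths e s t).

Definition betweenness {R : realType} (e : rel T) (v : T) : R :=
  ((#|T| * (#|T| - 1))%:R)^-1 *
  \sum_(s : T | s != v) \sum_(t : T | (t != v) && (t != s))
     (sigmav e s t v)%:R / (sigma e s t)%:R.

Definition VD (e : rel T) : nat := \max_(s : T) \max_(t : T) (dist e s t).+1.

Definition ordered_pairs : seq (T * T) :=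
  [seq st <- [seq (s, t) | s <- enum T, t <- enum T] | st.1 != st.2].

(* One iteration of sampling + procedure P, with its explicit randomness:
   an ordered pair (s,t), s <> t, uniformly; a shortest s-t path p of G
   uniformly; and (independently) a shortest s-t path q of G' uniformly,
   used as the replacement when p is not kept.  Each outcome is listed
   with its probability and the resulting path p'_st of S'. *)
Definition step_outcomes {R : realType} (e e' : rel T) : seq (R * seq T) :=
  flatten [seq flatten [seq [seq
      (((#|T| * (#|T| - 1))%:R)^-1 * ((sigma e st.1 st.2)%:R)^-1
          * ((sigma e' st.1 st.2)%:R)^-1,
       if (dist e' st.1 st.2 == dist e st.1 st.2)
          && (sigma e' st.1 st.2 == sigma e st.1 st.2) then p else q)
    | q <- spaths e' st.1 st.2]
    | p <- spaths e st.1 st.2]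
    | st <- ordered_pairs].

(* Probability, over r independent iterations, of the event
   "exists v, |c'_B(v) - c~'_B(v)| > eps", where c~'_B(v) is the fraction of
   the r paths of S' to which v is internal. *)
Definition prob_bad {R : realType} (e e' : rel T) (r : nat) (eps : R) : R :=
  let O := @step_outcomes R e e' in
  \sum_(f : {ffun 'I_r -> 'I_(size O)})
     (\prod_(i < r) (nth (0, [::]) O (f i)).1) *
     ([exists v : T,
        eps < `| betweenness e' v
                 - (r%:R)^-1 * \sum_(i < r)
                      (internal v (nth (0, [::]) O (f i)).2)%:R |] )%:R.

End Graphs.

Definition sample_size {R : realType} (c eps delta : R) (D : nat) : nat :=
  `| Num.ceil (c / eps ^+ 2 * ((trunc_log 2 (D - 2)).+1%:R + ln (delta^-1))) |%N.

From HB Require Import structures.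
From mathcomp Require Import all_boot all_order all_algebra.
From mathcomp Require Import all_classical all_reals all_analysis.
From mathcomp Require Import ring lra zify.
Import Order.TTheory GRing.Theory Num.Theory.
Set Implicit Arguments. Unset Strict Implicit. Unset Printing Implicit Defensive.
Local Open Scope ring_scope.

(* One round of procedure P outputs each shortest s-t path of G' with
   probability 1/(n(n-1) sigma'_st): a kept path was uniform among the shortest
   paths of G, which are then exactly those of G', and a replaced one is drawn
   uniformly from those of G'.  So the indicator "v is internal to the round's
   path" has mean c'_B(v), and a multiplicative Chernoff bound gives
   Pr(|c'_B(v) - c~'_B(v)| > eps) <= 2 c'_B(v) e^(-r eps^2/16).  Summing over v,
   and using that a shortest path of G' has at most VD(G) - 2 internal nodes,
   the failure probability is at most 2 (VD(G) - 2) e^(-r eps^2/16), which is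
   below delta once r >= 32/eps^2 (log2(VD(G) - 2) + 1 + ln(1/delta)). *)

Section ExpBounds.
Variable R : realType.

Lemma expR_le_quadratic (l : R) : 0 <= l -> l <= 1/4 -> expR l <= 1 + l + 2 * l ^+ 2.
Proof.
move=> l0 l1.
have hN : 1 - l <= expR (- l) by have := expR_ge1Dx (- l); lra.
have hinv : expR (- l) * expR l = 1 by rewrite -expRD addNr expR0.
have := expR_ge0 l; nra.
Qed.

Lemma expRN_le_quadratic (l : R) : 0 <= l -> expR (- l) <= 1 - l + l ^+ 2.
Proof.
move=> l0.
have hP : 1 + l <= expR l by exact: expR_ge1Dx.
have hinv : expR (- l) * expR l = 1 by rewrite -expRD addNr expR0.
have := expR_ge0 (- l); nra.
Qed.

Lemma mul_expRN_le (w a : R) : 1 <= w -> 1 <= a -> w * expR (- (a * w)) <= expR (- a).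
Proof.
move=> w1 a1.
have hw : w <= expR (a * w - a).
  apply: le_trans (expR_ge1Dx _).
  have : 0 <= (a - 1) * (w - 1) by apply: mulr_ge0; lra.
  nra.
have -> : expR (- a) = expR (a * w - a) * expR (- (a * w)).
  by rewrite -expRD; congr expR; ring.
by apply: ler_wpM2r => //; exact: expR_ge0.
Qed.

End ExpBounds.

Section IndependentSampling.
Variables (R : realType) (n r : nat) (W : 'I_n -> R) (b : 'I_n -> bool).
(* Only a sub-probability is required: the step distribution is zero when
   there are fewer than two vertices. *)
Hypotheses (W_ge0 : forall j, 0 <= W j) (W_sum_le1 : \sum_j W j <= 1).

Definition mean : R := \sum_j W j * (b j)%:R.

Definition expect (g : {ffun 'I_r -> 'I_n} -> R) : R :=
  \sum_(f : {ffun 'I_r -> 'I_n}) (\prod_(i < r) W (f i)) * g f.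

Definition hits (f : {ffun 'I_r -> 'I_n}) : R := \sum_(i < r) (b (f i))%:R.

Definition mgf (l : R) : R := \sum_j W j * expR (l * (b j)%:R).

Lemma ler_expect g h : (forall f, g f <= h f) -> expect g <= expect h.
Proof.
move=> gh; apply: ler_sum => f _; apply: ler_wpM2l => //.
by apply: prodr_ge0 => i _.
Qed.

Lemma expectZ c g : expect (fun f => c * g f) = c * expect g.
Proof. by rewrite /expect mulr_sumr; apply: eq_bigr => f _; ring. Qed.

Lemma expectD g h : expect (fun f => g f + h f) = expect g + expect h.
Proof. by rewrite /expect -big_split; apply: eq_bigr => f _; rewrite mulrDr. Qed.

Lemma expect_sum (I : finType) (G : I -> {ffun 'I_r -> 'I_n} -> R) :
  expect (fun f => \sum_i G i f) = \sum_i expect (G i).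
Proof. by rewrite /expect exchange_big; apply: eq_bigr => f _; rewrite mulr_sumr. Qed.

Lemma expect_prod (F : 'I_r -> 'I_n -> R) :
  expect (fun f => \prod_i F i (f i)) = \prod_i \sum_j W j * F i j.
Proof. by rewrite bigA_distr_bigA; apply: eq_bigr => f _; rewrite big_split. Qed.

Lemma mean_ge0 : 0 <= mean.
Proof. by apply: sumr_ge0 => j _; apply: mulr_ge0. Qed.

Lemma mean_le1 : mean <= 1.
Proof.
apply: le_trans W_sum_le1; apply: ler_sum => j _.
by rewrite ler_piMr // lern1 leq_b1.
Qed.

Lemma hits_ge0 f : 0 <= hits f.
Proof. by apply: sumr_ge0. Qed.

Lemma mgf_ge0 l : 0 <= mgf l.
Proof. by apply: sumr_ge0 => j _; apply: mulr_ge0 => //; exact: expR_ge0. Qed.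

Lemma mgf_le l : mgf l <= expR (mean * (expR l - 1)).
Proof.
apply: le_trans (expR_ge1Dx _).
have -> : mgf l = \sum_j W j + mean * (expR l - 1).
  rewrite /mgf /mean mulr_suml -big_split; apply: eq_bigr => j _.
  by case: (b j); rewrite /= ?mulr1n ?mulr0n ?mulr0 ?mulr1 ?expR0; ring.
by rewrite lerD2r.
Qed.

Lemma expect_expR_hits l :
  expect (fun f => expR (l * hits f)) <= expR (r%:R * (mean * (expR l - 1))).
Proof.
have -> : expect (fun f => expR (l * hits f)) =
          expect (fun f => \prod_i expR (l * (b (f i))%:R)).
  by congr expect; apply: funext => f; rewrite mulr_sumr expR_sum.
rewrite (expect_prod (fun _ j => expR (l * (b j)%:R))) prodr_const card_ord.
rewrite expRM_natl; apply: lerXn2r; rewrite ?nnegrE ?mgf_ge0 ?expR_ge0 //.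
exact: mgf_le.
Qed.

(* Size-biasing: [hits f * e^(l hits f)] is a sum over [i0 < r] of products
   with one factor per coordinate, the [i0]-th one carrying an extra [b]. *)
Lemma expect_hits_expR_hits l : 0 <= l ->
  expect (fun f => hits f * expR (l * hits f)) <=
  r%:R * (expR l * mean) * expR (r%:R * (mean * (expR l - 1))).
Proof.
move=> l0.
set M := expR (mean * (expR l - 1)).
have M1 : 1 <= M.
  apply: le_trans (expR_ge1Dx _); rewrite lerDl.
  by apply: mulr_ge0; [exact: mean_ge0|have := expR_ge1Dx l; lra].
pose F (i0 k : 'I_r) (j : 'I_n) : R := expR (l * (b j)%:R) * (if k == i0 then (b j)%:R else 1).
have -> : expect (fun f => hits f * expR (l * hits f)) =
          expect (fun f => \sum_(i0 < r) \prod_k F i0 k (f k)).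
  congr expect; apply: funext => f.
  rewrite /hits mulr_suml; apply: eq_bigr => i0 _.
  rewrite big_split /= mulr_sumr expR_sum mulrC; congr (_ * _).
  by rewrite -big_mkcond big_pred1_eq.
rewrite expect_sum expRM_natl.
have -> : r%:R * (expR l * mean) * M ^+ r = \sum_(i0 < r) expR l * mean * M ^+ r.
  by rewrite sumr_const card_ord -[in RHS]mulr_natl; ring.
apply: ler_sum => i0 _.
rewrite expect_prod (bigD1 i0) //= /F eqxx.
have -> : \sum_j W j * (expR (l * (b j)%:R) * (b j)%:R) = expR l * mean.
  rewrite /mean mulr_sumr; apply: eq_bigr => j _.
  by case: (b j); rewrite /= ?mulr1n ?mulr0n ?mulr0 ?mulr1 ?expR0; ring.
apply: ler_wpM2l; first by apply: mulr_ge0; [exact: expR_ge0|exact: mean_ge0].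
apply: (@le_trans _ _ (\prod_(k | k != i0) M)).
  apply: ler_prod => k /negbTE ->.
  under eq_bigr do rewrite mulr1.
  by rewrite mgf_ge0 mgf_le.
have -> : M ^+ r = \prod_(k < r) M by rewrite prodr_const card_ord.
rewrite [X in _ <= X](bigD1 i0) //= ler_peMl //.
by apply: prodr_ge0 => k _; apply: le_trans M1.
Qed.

Lemma expect_hits_gt_le (a l : R) : 0 < a -> 0 <= l ->
  expect (fun f => ((a < hits f)%R : bool)%:R) <=
  (a * expR (l * a))^-1 * expect (fun f => hits f * expR (l * hits f)).
Proof.
move=> a0 l0; have ea0 : 0 < a * expR (l * a) by rewrite mulr_gt0 ?expR_gt0.
rewrite -expectZ; apply: ler_expect => f.
case: (boolP (a < hits f)) => h /=.
  rewrite ler_pdivlMl // mulr1.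
  apply: ler_pM; [exact: ltW|exact: expR_ge0|exact: ltW|].
  by rewrite ler_expR ler_wpM2l // ltW.
by apply: mulr_ge0; [rewrite invr_ge0 ltW|rewrite mulr_ge0 ?hits_ge0 ?expR_ge0].
Qed.

Lemma expect_hits_lt_le (a l : R) : 0 <= l ->
  expect (fun f => ((hits f < a)%R : bool)%:R) <=
  expR (l * a) * expect (fun f => expR (- l * hits f)).
Proof.
move=> l0; rewrite -expectZ; apply: ler_expect => f.
case: (boolP (hits f < a)) => h /=; last by apply: mulr_ge0; exact: expR_ge0.
by rewrite -expRD -expR0 ler_expR; nra.
Qed.

End IndependentSampling.

Arguments hits {R n r} b f.

Section TailExponents.
Variable R : realType.
Implicit Types r mu eps u l : R.

Lemma upper_tail_exponent r mu eps u l :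
  0 < r -> 0 <= mu -> 0 < eps -> u = mu + eps -> l = eps / (4 * u) ->
  r * (mu * (expR l - 1)) - l * (r * u) <= - (r * eps ^+ 2 / 16 * (2 / u)).
Proof.
move=> r_gt0 mu_ge0 eps_gt0 hu hl.
have u_gt0 : 0 < u by lra.
have l0 : 0 <= l by rewrite hl divr_ge0 //; lra.
have lu : l * (4 * u) = eps by rewrite hl mulfVK //; lra.
have l14 : l <= 1/4 by rewrite hl ler_pdivrMr; lra.
have hexp : mu * (expR l - 1) <= mu * (l + 2 * l ^+ 2).
  by apply: ler_wpM2l => //; have := expR_le_quadratic l0 l14; lra.
(* [2 mu l^2 <= 2 u l^2 = l eps / 2] *)
have hquad : mu * (l + 2 * l ^+ 2) - l * u <= - (l * eps / 2).
  have : mu <= u by lra.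
  rewrite hu -lu; nra.
have -> : r * eps ^+ 2 / 16 * (2 / u) = r * (l * eps / 2).
  by rewrite -lu; field; lra.
nra.
Qed.

Lemma lower_tail_exponent r mu eps l :
  0 < r -> 0 < mu -> 0 < eps -> l = eps / (2 * mu) ->
  l * (r * (mu - eps)) + r * (mu * (expR (- l) - 1)) <= - (r * eps ^+ 2 / 4 * mu^-1).
Proof.
move=> r_gt0 mu_gt0 eps_gt0 hl.
have l0 : 0 <= l by rewrite hl divr_ge0 //; lra.
have lmu : l * (2 * mu) = eps by rewrite hl mulfVK //; lra.
have hexp : mu * (expR (- l) - 1) <= mu * (- l + l ^+ 2).
  by apply: ler_wpM2l => //; have := expRN_le_quadratic l0; lra.
have -> : r * eps ^+ 2 / 4 * mu^-1 = r * (l * eps / 2).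
  by rewrite -lmu; field; lra.
have : l * (mu - eps) + mu * (- l + l ^+ 2) = - (l * eps / 2) by rewrite -lmu; field; lra.
nra.
Qed.

Lemma natr_gt0_of_mul_ge (r : nat) (y : R) : 16 <= r%:R * y -> 0 < r%:R :> R.
Proof. by rewrite ltr0n lt0n; apply: contraTneq => ->; rewrite mul0r; lra. Qed.

End TailExponents.

Section ChernoffTails.
Variables (R : realType) (n r : nat) (W : 'I_n -> R) (b : 'I_n -> bool).
Hypotheses (W_ge0 : forall j, 0 <= W j) (W_sum_le1 : \sum_j W j <= 1).

Local Notation mean := (mean W b).
Local Notation expect := (@expect R n r W).
Local Notation hits := (@hits R n r b).

Lemma expect_hits_upper_tail eps : 0 < eps -> eps < 1 -> 16 <= r%:R * eps ^+ 2 ->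
  expect (fun f => ((r%:R * (mean + eps) < hits f)%R : bool)%:R) <=
  mean * expR (- (r%:R * eps ^+ 2 / 16)).
Proof.
move=> e0 e1 ry; have r_gt0 := natr_gt0_of_mul_ge ry.
have mu0 : 0 <= mean := mean_ge0 b W_ge0.
have mu1 : mean <= 1 := mean_le1 b W_ge0 W_sum_le1.
set u := mean + eps; set l := eps / (4 * u); set y := r%:R * eps ^+ 2.
have u_gt0 : 0 < u by rewrite /u; lra.
have l0 : 0 <= l by rewrite /l divr_ge0 //; lra.
have el2 : expR l <= 2.
  have l14 : l <= 1/4 by rewrite /l ler_pdivrMr; rewrite /u; lra.
  have := expR_le_quadratic l0 l14; nra.
set w := 2 / u.
have w1 : 1 <= w by rewrite /w ler_pdivlMr //; rewrite /u; lra.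
apply: le_trans (expect_hits_gt_le r b W_ge0 (mulr_gt0 r_gt0 u_gt0) l0) _.
apply: le_trans (ler_wpM2l _ (expect_hits_expR_hits r b W_ge0 W_sum_le1 l0)) _.
  by rewrite invr_ge0 ltW // mulr_gt0 ?expR_gt0 // mulr_gt0.
have -> : (r%:R * u * expR (l * (r%:R * u)))^-1 *
     (r%:R * (expR l * mean) * expR (r%:R * (mean * (expR l - 1)))) =
   mean * (expR l / u * expR (r%:R * (mean * (expR l - 1)) - l * (r%:R * u))).
  by rewrite expRD expRN; field; rewrite !gt_eqF ?expR_gt0.
have y16 : 1 <= y / 16 by rewrite /y; lra.
apply: ler_wpM2l => //; apply: (le_trans _ (mul_expRN_le w1 y16)).
apply: ler_pM.
- by rewrite divr_ge0 ?expR_ge0 ?ltW.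
- exact: expR_ge0.
- by rewrite /w ler_pM2r ?invr_gt0.
- by rewrite ler_expR /y; exact: upper_tail_exponent.
Qed.

Lemma expect_hits_lower_tail eps : 0 < eps -> eps < 1 -> 16 <= r%:R * eps ^+ 2 ->
  expect (fun f => ((hits f < r%:R * (mean - eps))%R : bool)%:R) <=
  mean * expR (- (r%:R * eps ^+ 2 / 16)).
Proof.
move=> e0 e1 ry; have r_gt0 := natr_gt0_of_mul_ge ry.
have mu0 : 0 <= mean := mean_ge0 b W_ge0.
set y := r%:R * eps ^+ 2.
have [mu_le_eps|eps_lt_mu] := lerP mean eps.
  (* the event [hits f < r (mean - eps) <= 0] is empty *)
  apply: (@le_trans _ _ (expect (fun f => 0 * 0))).
    apply: ler_expect => // f; case: ltP => h //=; rewrite ?mul0r //.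
    have := hits_ge0 R b f; have : r%:R * (mean - eps) <= 0 by nra.
    lra.
  by rewrite expectZ mul0r mulr_ge0 ?expR_ge0.
have mu_gt0 : 0 < mean by lra.
set l := eps / (2 * mean).
have l0 : 0 <= l by rewrite /l divr_ge0 //; lra.
apply: le_trans (expect_hits_lt_le r b W_ge0 _ l0) _.
apply: le_trans (ler_wpM2l (expR_ge0 _) (expect_expR_hits r b W_ge0 W_sum_le1 (- l))) _.
set w := mean^-1.
have w1 : 1 <= w by rewrite /w invr_ge1 ?unitfE ?gt_eqF //; exact: mean_le1.
rewrite -expRD; apply: (@le_trans _ _ (expR (- (y / 4 * w)))).
  by rewrite ler_expR /y; exact: lower_tail_exponent.
have -> : expR (- (y / 4 * w)) = mean * (w * expR (- (y / 4 * w))).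
  by rewrite mulrA mulfV ?gt_eqF // mul1r.
have y4 : 1 <= y / 4 by rewrite /y; lra.
apply: ler_wpM2l => //; apply: (le_trans (mul_expRN_le w1 y4)).
by rewrite ler_expR /y; lra.
Qed.

End ChernoffTails.

Lemma deviation_tails (R : realType) (N x y eps : R) : 0 < N ->
  eps < `|x - N^-1 * y| -> (N * (x + eps) < y) || (y < N * (x - eps)).
Proof.
move=> N_gt0; rewrite ltr_normr => /orP dev.
have -> : y = N * (N^-1 * y) by rewrite mulrA mulfV ?gt_eqF ?mul1r.
rewrite !ltr_pM2l //; apply/orP; case: dev => h; [right|left]; lra.
Qed.

Section UnionBound.
Variables (R : realType) (V : finType) (n r k : nat).
Variables (W : 'I_n -> R) (B : V -> 'I_n -> bool).
Hypotheses (W_ge0 : forall j, 0 <= W j) (W_sum_le1 : \sum_j W j <= 1).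
Hypothesis B_sum_le : forall j, \sum_v ((B v j)%:R : R) <= k%:R.

Lemma sum_mean_le : \sum_v mean W (B v) <= k%:R.
Proof.
rewrite exchange_big /=; apply: le_trans (_ : \sum_j W j * k%:R <= _).
  by apply: ler_sum => j _; rewrite -mulr_sumr ler_wpM2l.
by rewrite -mulr_suml ler_piMl.
Qed.

Lemma expect_exists_deviation_le (m : V -> R) (eps : R) :
  (forall v, m v = mean W (B v)) ->
  0 < eps -> eps < 1 -> 16 <= r%:R * eps ^+ 2 ->
  expect W (fun f : {ffun 'I_r -> 'I_n} =>
    ([exists v, eps < `|m v - r%:R^-1 * hits (B v) f|])%:R) <=
  2 * k%:R * expR (- (r%:R * eps ^+ 2 / 16)).
Proof.
move=> m_mean e0 e1 ry; have r_gt0 := natr_gt0_of_mul_ge ry.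
set E := expR _; have E0 : 0 <= E := expR_ge0 _.
pose tails v (f : {ffun 'I_r -> 'I_n}) : R :=
  ((r%:R * (mean W (B v) + eps) < hits (B v) f)%R : bool)%:R +
  ((hits (B v) f < r%:R * (mean W (B v) - eps))%R : bool)%:R.
apply: (@le_trans _ _ (expect W (fun f => \sum_v tails v f))).
  apply: ler_expect => // f.
  have tails_ge0 v : 0 <= tails v f by rewrite addr_ge0.
  case: existsP => [[v hv]|_] /=; last by rewrite sumr_ge0.
  rewrite (bigD1 v) //= -[X in X <= _]addr0 lerD ?sumr_ge0 //.
  move: hv; rewrite m_mean /tails => /(deviation_tails r_gt0).
  by case/orP => ->; rewrite /= ?lerDl ?lerDr.
rewrite expect_sum.
apply: (@le_trans _ _ (\sum_v 2 * (mean W (B v) * E))).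
  apply: ler_sum => v _; rewrite expectD mulr2n mulrDl mul1r.
  by apply: lerD; [apply: expect_hits_upper_tail|apply: expect_hits_lower_tail].
rewrite -mulr_sumr -mulr_suml -mulrA ler_wpM2l // ler_wpM2r //.
exact: sum_mean_le.
Qed.

End UnionBound.

Section SampleSize.
Variable R : realType.

Lemma natr_le_expR_trunc_log (m : nat) : m%:R <= expR (trunc_log 2 m).+1%:R :> R.
Proof.
have /ltnW := trunc_log_ltn m (isT : 1 < 2)%N; rewrite -(ler_nat R) natrX => /le_trans.
apply; rewrite -[X in expR X]mulr1 expRM_natl lerXn2r ?nnegrE ?expR_ge0 //.
by have := expR_ge1Dx (1 : R); lra.
Qed.

Lemma sample_size_ge (c eps delta : R) (D : nat) : 0 < c -> 0 < eps -> 0 < delta < 1 ->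
  c * ((trunc_log 2 (D - 2)).+1%:R + ln delta^-1) <=
  (sample_size c eps delta D)%:R * eps ^+ 2.
Proof.
move=> c0 e0 /andP [d0 d1].
have L0 : 0 < ln delta^-1 :> R by rewrite lnV ?posrE // oppr_gt0 ln_lt0 // d0.
set X := c / eps ^+ 2 * ((trunc_log 2 (D - 2)).+1%:R + ln delta^-1).
have e20 : 0 < eps ^+ 2 := exprn_gt0 2 e0.
have X0 : 0 < X by rewrite mulr_gt0 ?divr_gt0 // addr_gt0.
have rX : X <= (sample_size c eps delta D)%:R.
  by rewrite /sample_size -/X natr_absz gtr0_norm ?ceil_ge // ceil_gt0.
by rewrite -(ler_pM2r e20) /X mulrAC divfK ?gt_eqF in rX.
Qed.

(* With [r eps^2 >= 32 (L + ln (1/delta))] and [D - 2 <= e^L], the bound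
   [2 (D - 2) e^(-r eps^2/16)] is at most [2 e^(-L) delta^2 <= delta^2]. *)
Lemma sample_size_spec (eps delta : R) (D : nat) : 0 < eps -> 0 < delta < 1 ->
  let r := sample_size 32 eps delta D in
  (16 <= r%:R * eps ^+ 2) /\
  (2 * (D - 2)%N%:R * expR (- (r%:R * eps ^+ 2 / 16)) < delta).
Proof.
move=> e0 hd r; have /andP [d0 d1] := hd.
have c0 : 0 < 32 :> R by rewrite ltr0n.
have hr := sample_size_ge D c0 e0 hd; rewrite -/r in hr.
set L : R := (trunc_log 2 (D - 2)).+1%:R in hr; set Ld := ln delta^-1 in hr.
have L1 : 1 <= L by rewrite /L ler1n.
have Ld0 : 0 < Ld by rewrite /Ld lnV ?posrE // oppr_gt0 ln_lt0 // d0.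
split; first lra.
set m : R := (D - 2)%N%:R; have m0 : 0 <= m := ler0n _ _.
have hE : expR (- (r%:R * eps ^+ 2 / 16)) <= expR (- L) ^+ 2 * delta ^+ 2.
  have -> : delta = expR (- Ld) by rewrite /Ld lnV ?posrE // opprK lnK.
  by rewrite -!expRM_natl -expRD ler_expR; lra.
have eLL : expR L * expR (- L) = 1 by rewrite -expRD subrr expR0.
have eL0 := expR_gt0 (- L).
have mL : m * expR (- L) <= 1.
  have : m <= expR L := natr_le_expR_trunc_log (D - 2).
  nra.
have eL : expR (- L) <= 1 / 2.
  have : 2 <= expR L by apply: le_trans (expR_ge1Dx _) _; rewrite ler_expR; lra.
  nra.
have d2 : delta ^+ 2 < delta by rewrite expr2; nra.
apply: le_lt_trans d2; apply: le_trans (ler_wpM2l _ hE) _; first lra.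
have k1 : 2 * m * expR (- L) ^+ 2 <= 1 by rewrite expr2; nra.
by rewrite mulrA -[X in _ <= X]mul1r ler_wpM2r // exprn_ge0 // ltW.
Qed.

End SampleSize.

Lemma sumr_const_seq (R : pzSemiRingType) (A : Type) (l : seq A) (c : R) :
  \sum_(x <- l) c = (size l)%:R * c.
Proof. by rewrite big_const_seq count_predT iter_addr_0 mulr_natl. Qed.

Lemma sumr_count (R : pzSemiRingType) (A : Type) (l : seq A) (a : pred A) :
  \sum_(x <- l) ((a x)%:R : R) = (count a l)%:R.
Proof. by rewrite -sum1_count natr_sum [RHS]big_mkcond; apply: eq_bigr => x _; case: (a x). Qed.

Lemma sumr_mem_card (R : pzSemiRingType) (T : finType) (A : pred T) :
  \sum_v ((v \in A)%:R : R) = #|A|%:R.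
Proof. by rewrite -sum1_card natr_sum [RHS]big_mkcond; apply: eq_bigr => v _; case: (v \in A). Qed.

Lemma all_flatten (A : Type) (a : pred A) (ss : seq (seq A)) :
  all a (flatten ss) = all (all a) ss.
Proof. by elim: ss => //= s ss IH; rewrite all_cat IH. Qed.

Section ShortestPaths.
Variable T : finType.
Implicit Types (e : rel T) (s t v : T).

Lemma mem_spaths_walk e s t p : p \in spaths e s t ->
  exists w, [/\ p = s :: w, size w = dist e s t & walk_of e s t w].
Proof.
case/mapP => w; rewrite mem_enum => hw ->.
by exists (tval w); rewrite size_tuple.
Qed.

Lemma walk_mem_spaths e s t w : size w = dist e s t -> walk_of e s t w ->
  (s :: w) \in spaths e s t.
Proof.
move=> /eqP hs hw; apply/mapP; exists (Tuple hs) => //.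
by rewrite mem_enum.
Qed.

Lemma uniq_spaths e s t : uniq (spaths e s t).
Proof.
rewrite map_inj_in_uniq ?enum_uniq // => w1 w2 _ _ [] h.
exact: val_inj.
Qed.

Lemma head_last_spaths e s t p x : p \in spaths e s t ->
  head x p = s /\ last x p = t.
Proof. by case/mem_spaths_walk => w [-> _ /andP [_ /eqP <-]]. Qed.

(* A shortest connecting path is duplicate-free, hence has fewer than #|T|
   edges, so [find] in the definition of [dist] succeeds. *)
Lemma connect_has_walk_dist e s t : connect e s t ->
  has_walk e s t (dist e s t) /\ (dist e s t < #|T|)%N.
Proof.
case/connectP => p hp ->; case/shortenP: hp => p' hp' hu _.
have hsz : (size p' < #|T|)%N by have := max_card (mem (s :: p')); rewrite (card_uniqP hu).
have hhas : has (has_walk e s (last s p')) (iota 0 #|T|).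
  apply/hasP; exists (size p'); first by rewrite mem_iota.
  by apply/existsP; exists (in_tuple p'); rewrite /walk_of hp' eqxx.
have hlt : (dist e s (last s p') < #|T|)%N.
  by rewrite /dist -[X in (_ < X)%N](size_iota 0 #|T|) -has_find.
by split=> //; have := nth_find 0 hhas; rewrite nth_iota ?add0n.
Qed.

Lemma dist_le e s t k : has_walk e s t k -> (k < #|T|)%N -> (dist e s t <= k)%N.
Proof.
move=> hw hk; rewrite leqNgt; apply/negP => /(before_find 0).
by rewrite nth_iota // add0n hw.
Qed.

Lemma sigma_gt0 e s t : connect e s t -> (0 < sigma e s t)%N.
Proof.
case/connect_has_walk_dist => /existsP [w hw] _.
have := walk_mem_spaths (size_tuple w) hw.
by rewrite /sigma; case: (spaths e s t).
Qed.

Lemma walk_of_subrel e e' s t w : subrel e e' -> walk_of e s t w -> walk_of e' s t w.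
Proof. by move=> sub /andP [hp hl]; rewrite /walk_of (sub_path sub hp) hl. Qed.

Lemma dist_subrel e e' s t : subrel e e' -> connect e s t ->
  (dist e' s t <= dist e s t)%N.
Proof.
move=> sub /connect_has_walk_dist [/existsP [w hw] hlt].
by apply: dist_le => //; apply/existsP; exists w; exact: walk_of_subrel hw.
Qed.

Lemma dist_lt_VD e s t : (dist e s t < VD e)%N.
Proof.
apply: leq_trans (leq_bigmax s).
exact: (leq_bigmax (F := fun t => (dist e s t).+1) t).
Qed.

Lemma sum_internal_le (R : numDomainType) (x : T) (w : seq T) :
  \sum_v ((internal v (x :: w))%:R : R) <= ((size w).-1)%:R.
Proof.
case/lastP: w => [|w' y].
  by rewrite big1 // => v _; rewrite /internal /= mem_seq1; case: eqP.
rewrite size_rcons /=; apply: (@le_trans _ _ (\sum_v ((v \in w')%:R : R))).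
  apply: ler_sum => v _; case hi: (internal v (x :: rcons w' y)) => //=.
  move: hi; rewrite /internal /= last_rcons in_cons mem_rcons in_cons.
  by case/and3P => + /negbTE hx /negbTE hy; rewrite hx hy /= => ->.
by rewrite sumr_mem_card ler_nat card_size.
Qed.

Lemma sigmav_endpoint e s t v : (s == v) || (t == v) -> sigmav e s t v = 0%N.
Proof.
move=> h; apply/eqP; rewrite -leqn0 leqNgt -has_count; apply/hasPn => p hp.
rewrite /internal; have [-> ->] := head_last_spaths v hp.
by case/orP: h => /eqP ->; rewrite eqxx /= ?andbF.
Qed.

(* The shortest s-t paths of G are shortest in G' and equally many. *)
Lemma count_spaths_subrel e e' s t (a : pred (seq T)) : subrel e e' ->
  dist e' s t = dist e s t -> sigma e' s t = sigma e s t ->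
  count a (spaths e s t) = count a (spaths e' s t).
Proof.
move=> sub hd hs.
have hsub : {subset spaths e s t <= spaths e' s t}.
  move=> p /mem_spaths_walk [w [-> hw hwk]].
  by apply: walk_mem_spaths; [rewrite hd|exact: walk_of_subrel hwk].
have [_ eqi] := uniq_min_size (uniq_spaths e s t) hsub (eq_leq hs).
by apply/permP/uniq_perm => //; exact: uniq_spaths.
Qed.

End ShortestPaths.

Section Procedure.
Variables (R : realType) (T : finType) (e e' : rel T).
Hypotheses (sub : subrel e e') (conn : connected_graph e).

Definition npairs : R := (#|T| * (#|T| - 1))%:R.

Definition outcome_weight (st : T * T) : R :=
  npairs^-1 * ((sigma e st.1 st.2)%:R)^-1 * ((sigma e' st.1 st.2)%:R)^-1.

Definition path_kept (st : T * T) : bool :=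
  (dist e' st.1 st.2 == dist e st.1 st.2) && (sigma e' st.1 st.2 == sigma e st.1 st.2).

Local Notation outcomes := (@step_outcomes T R e e').

Lemma big_step_outcomes (F : R * seq T -> R) :
  \sum_(x <- outcomes) F x =
  \sum_s \sum_(t | t != s) \sum_(p <- spaths e s t) \sum_(q <- spaths e' s t)
     F (outcome_weight (s, t), if path_kept (s, t) then p else q).
Proof.
rewrite big_flatten big_map /ordered_pairs big_filter big_mkcond big_allpairs.
rewrite big_enum; apply: eq_bigr => s _.
rewrite big_enum [RHS]big_mkcond; apply: eq_bigr => t _; rewrite eq_sym.
case: ifP => // _; rewrite big_flatten big_map; apply: eq_bigr => p _.
by rewrite big_map.
Qed.

Lemma connect_subrel s t : connect e' s t.
Proof. by apply: connect_sub (conn s t) => x y exy; apply: connect1; exact: sub. Qed.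

Lemma sigma_neq0 s t : (sigma e s t)%:R != 0 :> R.
Proof. by rewrite pnatr_eq0 -lt0n sigma_gt0. Qed.

Lemma sigma'_neq0 s t : (sigma e' s t)%:R != 0 :> R.
Proof. by rewrite pnatr_eq0 -lt0n sigma_gt0 // connect_subrel. Qed.

Lemma sum_outcome_weight s t :
  \sum_(p <- spaths e s t) \sum_(q <- spaths e' s t) outcome_weight (s, t) = npairs^-1.
Proof.
rewrite !sumr_const_seq /outcome_weight /=.
have := sigma_neq0 s t; have := sigma'_neq0 s t; rewrite /sigma => h' h.
by set c := npairs^-1; field; rewrite h h'.
Qed.

(* The kept path is uniform on the shortest s-t paths of G when they are
   also those of G', and the replacement is uniform on those of G' anyway. *)
Lemma sum_outcome_internal s t v :
  \sum_(p <- spaths e s t) \sum_(q <- spaths e' s t)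
     outcome_weight (s, t) * (internal v (if path_kept (s, t) then p else q))%:R
  = npairs^-1 * (sigmav e' s t v)%:R / (sigma e' s t)%:R.
Proof.
have := sigma_neq0 s t; have := sigma'_neq0 s t; rewrite /sigma => h' h.
case hk: (path_kept (s, t)).
  move: hk => /andP [/eqP hd /eqP hs].
  under eq_bigr do rewrite sumr_const_seq mulrA.
  rewrite -mulr_sumr sumr_count (count_spaths_subrel _ sub hd hs) /sigmav.
  move: h'; rewrite /outcome_weight /= -/(sigma e' s t) -/(sigma e s t) -hs.
  by set c := npairs^-1; move=> h'; field.
under eq_bigr do rewrite -mulr_sumr sumr_count.
rewrite sumr_const_seq /outcome_weight /sigmav /=.
by set c := npairs^-1; field; rewrite h h'.
Qed.

Lemma step_weights_ge0 : all (fun x : R * seq T => 0 <= x.1) outcomes.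
Proof.
rewrite /step_outcomes all_flatten all_map; apply/allP => st _ /=.
rewrite all_flatten all_map; apply/allP => p _ /=.
rewrite all_map; apply/allP => q _ /=.
by rewrite !mulr_ge0 // invr_ge0 ler0n.
Qed.

Lemma sum_step_weights_le1 : \sum_(x <- outcomes) x.1 <= 1.
Proof.
rewrite big_step_outcomes.
under eq_bigr do under eq_bigr do rewrite sum_outcome_weight.
under eq_bigr do rewrite sumr_const cardC1.
rewrite sumr_const -mulrnA -mulr_natr mulrC mulnC -subn1 -/npairs.
by have [->|h] := eqVneq npairs 0; rewrite ?invr0 ?mulr0 // mulfV.
Qed.

Lemma betweenness_step_mean v :
  betweenness e' v = \sum_(x <- outcomes) x.1 * (internal v x.2)%:R.
Proof.
rewrite big_step_outcomes.
under [RHS]eq_bigr do under eq_bigr do rewrite sum_outcome_internal -mulrA.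
rewrite /betweenness -/npairs mulr_sumr [LHS]big_mkcond; apply: eq_bigr => s _ /=.
case: eqVneq => [->|_] /=.
  by rewrite big1 // => t _; rewrite sigmav_endpoint ?eqxx // mul0r mulr0.
rewrite mulr_sumr [LHS]big_mkcond [RHS]big_mkcond; apply: eq_bigr => t _ /=.
case: eqVneq => [->|_] //=.
by case: ifP => // _; rewrite sigmav_endpoint ?eqxx ?orbT // mul0r mulr0.
Qed.

(* A replacement path is no longer than a shortest path of G, as G' has more
   edges. *)
Lemma step_internal_le (D : nat) : (VD e <= D)%N ->
  all (fun x : R * seq T => \sum_v ((internal v x.2)%:R : R) <= (D - 2)%N%:R) outcomes.
Proof.
move=> hD.
have spath_internal_le (g : rel T) s t p : p \in spaths g s t ->
    (dist g s t <= dist e s t)%N -> \sum_v ((internal v p)%:R : R) <= (D - 2)%N%:R.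
  case/mem_spaths_walk => w [-> hw _] hle; apply: le_trans (sum_internal_le _ _ _) _.
  by rewrite ler_nat hw; have := dist_lt_VD e s t; lia.
rewrite /step_outcomes all_flatten all_map; apply/allP => st _ /=.
rewrite all_flatten all_map; apply/allP => p hp /=.
rewrite all_map; apply/allP => q hq /=.
case: ifP => _; first exact: spath_internal_le hp (leqnn _).
by apply: spath_internal_le hq _; exact: dist_subrel.
Qed.

End Procedure.

Theorem theorem1 (R : realType) :
  exists c : R, 0 < c /\
  forall (T : finType) (e e' : rel T) (D : nat) (eps delta : R),
    simple_graph e -> simple_graph e' -> subrel e e' ->
    connected_graph e ->
    (VD e <= D)%N ->
    0 < eps < 1 -> 0 < delta < 1 ->
    prob_bad e e' (sample_size c eps delta D) eps < delta.
Proof.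
exists 32; split; first by rewrite ltr0n.
move=> T e e' D eps delta _ _ sub conn hD /andP [e0 e1] hd.
have [ry hdelta] := sample_size_spec D e0 hd.
apply: le_lt_trans hdelta.
set O := @step_outcomes T R e e'.
have big_nthO (F : R * seq T -> R) :
    \sum_(j < size O) F (nth (0, [::]) O j) = \sum_(x <- O) F x.
  by rewrite (big_nth (0, [::])) big_mkord.
apply: (@expect_exists_deviation_le R T (size O) _ (D - 2)
   (fun j => (nth (0, [::]) O j).1) (fun v j => internal v (nth (0, [::]) O j).2)) => //.
- by move=> j; apply: (all_nthP _ (step_weights_ge0 R e e')).
- by rewrite (big_nthO (fun x => x.1)); exact: sum_step_weights_le1.
- by move=> j; apply: (all_nthP _ (step_internal_le R sub conn hD)).
- move=> v; rewrite /mean (big_nthO (fun x => x.1 * (internal v x.2)%:R)).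
  exact: betweenness_step_mean.
Qed.
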